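(* Let $G$ be a block graph on $n$ vertices, i.e. a connected finite simple graph every block of which (maximal connected subgraph without a cut-vertex) is a clique. Let $w:E(G)\to\mathbb{R}_{>0}$ be a positive edge-weighting such that for every clique block $K$ with $|V(K)|=r\ge 4$, the restriction of $w$ to $E(K)$ is vertex-induced, i.e. there is $a_K:V(K)\to\mathbb{R}_{\ge0}$ with $w(uv)=\frac{a_K(u)+a_K(v)}{2}$ for all $uv\in E(K)$ (triangle blocks and bridges may carry arbitrary positive weights). For each edge $e$ define $C_w(e)$ as the maximum of $w(C)=\sum_{f\in E(C)}w(f)$ over all cycles $C\subseteq G$ containing $e$ if $e$ lies on a cycle, and $C_w(e)=2w(e)$ if $e$ is a bridge. Then $$\sum_{e\in E(G)}\frac{w(e)}{C_w(e)}=\frac{n-1}{2}.$$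
   Context: A bridge is an edge lying on no cycle. *)

From mathcomp Require Import all_boot all_order all_algebra.
Set Implicit Arguments. Unset Strict Implicit. Unset Printing Implicit Defensive.
Import Order.TTheory GRing.Theory Num.Theory.
Local Open Scope ring_scope.

Section Graph.
Variable T : finType.
Variable e : rel T.

Definition simple_graph : Prop := symmetric e /\ irreflexive e.

Definition edges : {set {set T}} := [set [set x; y] | x in T, y in T & e x y].

Definition erestr (B : {set T}) : rel T := [rel x y | [&& e x y, x \in B & y \in B]].

Definition connected_in (B : {set T}) : bool :=
  [forall x in B, forall y in B, connect (erestr B) x y].

Definition graph_connected : bool := connected_in setT.

Definition no_cut_vertex (B : {set T}) : bool :=
  connected_in B && [forall v in B, connected_in (B :\ v)].

Definition is_block (B : {set T}) : bool :=
  no_cut_vertex B && [forall B' : {set T}, (B \subset B') && no_cut_vertex B' ==> (B' == B)].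

Definition is_clique (B : {set T}) : bool :=
  [forall x in B, forall y in B, (x != y) ==> e x y].

Definition block_graph : Prop :=
  simple_graph /\ graph_connected /\ forall B, is_block B -> is_clique B.

Definition cycle_edges (s : seq T) : {set {set T}} :=
  [set [set x; next s x] | x in s].

Definition is_cycle_edgeset (F : {set {set T}}) : bool :=
  [exists k : 'I_(#|T|.+1), [exists t : k.-tuple T,
     [&& (2 < k)%N, uniq t, cycle e t & F == cycle_edges t]]].

Variable R : realFieldType.
Variable w : {set T} -> R.

Definition cycle_weight (F : {set {set T}}) : R := \sum_(g in F) w g.

Definition on_cycle (f : {set T}) : bool :=
  [exists F, is_cycle_edgeset F && (f \in F)].

Definition Cw (f : {set T}) : R :=
  if on_cycle f then
    \big[Num.max/0]_(F | is_cycle_edgeset F && (f \in F)) cycle_weight F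
  else 2 * w f.

End Graph.

(* Every cycle of a block graph lies in a single block: its vertex set has no
   cut vertex, so it sits inside a block, and blocks are cliques.  Hence a bridge f
   has C_w(f) = 2 w(f), so w(f) / C_w(f) = 1/2.  In a block K with at least three
   vertices and vertex-induced weights a (which always exist on a triangle) a cycle
   weighs the a-sum of its vertices, so a Hamiltonian cycle of K is the heaviest and
   C_w = a(K) on the edges of K; they contribute
   sum_uv (a u + a v) / (2 a(K)) = (|K| - 1) / 2.  In both cases the edges of a block B
   contribute as much as giving each of them the share 1/|B|.  These shares add up
   to (n - 1)/2: remove a vertex v that is not a cut vertex (the end of a maximal
   path); its neighbourhood N is a clique, the block N + v turns into N, no other
   block changes, and the sum of the shares drops by exactly 1/2. *)

From mathcomp Require Import all_boot all_order all_algebra.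
From mathcomp Require Import ring.
Set Implicit Arguments. Unset Strict Implicit. Unset Printing Implicit Defensive.
Import Order.TTheory GRing.Theory Num.Theory.
Local Open Scope ring_scope.

Lemma sum_set2 (T : finType) (M : nmodType) (h : T -> M) x y : x != y ->
  \sum_(u in [set x; y]) h u = h x + h y.
Proof. by move=> xy; rewrite big_setU1 ?big_set1 // inE. Qed.

Lemma sum_next (T : finType) (M : nmodType) (h : T -> M) (t : seq T) : uniq t ->
  \sum_(x in t) h (next t x) = \sum_(x in t) h x.
Proof.
move=> ut; rewrite [RHS](reindex_inj (can_inj (prev_next ut))) /=.
by apply: eq_bigl => x; rewrite mem_next.
Qed.

Lemma ler_sum_subset (T : finType) (R : numDomainType) (a : T -> R) (C K : {set T}) :
  {in K, forall x, 0 <= a x} -> C \subset K -> \sum_(x in C) a x <= \sum_(x in K) a x.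
Proof.
move=> a_ge0 sCK; rewrite [X in _ <= X](big_setID C) (setIidPr sCK) lerDl.
by apply: sumr_ge0 => x /setDP[xK _]; apply: a_ge0.
Qed.

Section SimpleGraph.

Variables (T : finType) (e : rel T).
Hypotheses (e_sym : symmetric e) (e_irr : irreflexive e).

Lemma edge_neq x y : e x y -> x != y.
Proof. by apply: contraTneq => ->; rewrite e_irr. Qed.

Lemma erestr_sym (B : {set T}) : symmetric (erestr e B).
Proof. by move=> x y; rewrite /erestr /= e_sym [(y \in B) && _]andbC. Qed.

Lemma connect_erestr_sym (B : {set T}) : connect_sym (erestr e B).
Proof. exact/sym_connect_sym/erestr_sym. Qed.

Lemma cliqueP (B : {set T}) :
  reflect {in B &, forall x y, x != y -> e x y} (is_clique e B).
Proof.
apply: (iffP forall_inP) => [cB x y xB yB | cB x xB].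
  by move/forall_inP: (cB x xB) => /(_ y yB)/implyP.
by apply/forall_inP => y yB; apply/implyP; apply: cB.
Qed.

Lemma connectedP (B : {set T}) :
  reflect {in B &, forall x y, connect (erestr e B) x y} (connected_in e B).
Proof.
apply: (iffP forall_inP) => [cB x y xB yB | cB x xB].
  by move/forall_inP: (cB x xB) => /(_ y yB).
by apply/forall_inP => y yB; apply: cB.
Qed.

Lemma edgesP f : reflect (exists x y, e x y /\ f = [set x; y]) (f \in edges e).
Proof.
apply: (iffP imset2P) => [[x y _ + ->] | [x [y [exy ->]]]].
  by rewrite inE => exy; exists x, y.
by apply: (Imset2spec (x1 := x) (x2 := y)); rewrite ?inE.
Qed.

Definition edges_in (V : {set T}) := [set f in edges e | f \subset V].

Lemma edges_inP (V : {set T}) f :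
  reflect (exists x y, [/\ e x y, x \in V, y \in V & f = [set x; y]])
          (f \in edges_in V).
Proof.
rewrite inE.
apply: (iffP andP) => [[/edgesP[x [y [exy ->]]] sV] | [x [y [exy xV yV ->]]]].
  by exists x, y; split => //; apply: (subsetP sV); rewrite !inE eqxx ?orbT.
split; first by apply/edgesP; exists x, y.
by apply/subsetP => z; rewrite !inE => /orP[]/eqP->.
Qed.

Lemma edges_inS (A B : {set T}) : A \subset B -> {subset edges_in A <= edges_in B}.
Proof. by move=> sAB f; rewrite !inE => /andP[-> /subset_trans->]. Qed.

Lemma edges_inT : edges_in setT = edges e.
Proof. by apply/setP => f; rewrite !inE subsetT andbT. Qed.

Lemma card_clique_edges_at (K : {set T}) u : is_clique e K -> u \in K ->
  #|[set g in edges_in K | u \in g]| = (#|K| - 1)%N.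
Proof.
move=> /cliqueP cK uK.
have -> : [set g in edges_in K | u \in g] = [set [set u; v] | v in K :\ u].
  apply/setP => g; rewrite inE; apply/andP/imsetP.
    move=> [/edges_inP[x [y [exy xK yK ->]]]].
    rewrite !inE => /orP[]/eqP ->.
      by exists y; rewrite // !inE yK andbT eq_sym edge_neq.
    by exists x; rewrite 1?setUC // !inE xK andbT edge_neq.
  move=> [v /setD1P[vu vK] ->]; split; last by rewrite !inE eqxx.
  by apply/edges_inP; exists u, v; rewrite cK // eq_sym.
rewrite card_in_imset; first by rewrite (cardsD1 u K) uK subSS subn0.
move=> v1 v2 /setD1P[v1u _] _ /setP /(_ v1).
by rewrite !inE eqxx orbT (negbTE v1u) eq_sym => /esym/eqP.
Qed.

Lemma clique_sum_over_edges (M : nmodType) (K : {set T}) (h : T -> M) :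
  is_clique e K ->
  \sum_(g in edges_in K) \sum_(u in g) h u = (\sum_(u in K) h u) *+ (#|K| - 1).
Proof.
move=> cK; rewrite (exchange_big_dep (mem K)) /=; last first.
  by move=> g u /edges_inP[x [y [_ xK yK ->]]]; rewrite !inE => /orP[]/eqP->.
rewrite -sumrMnl; apply: eq_bigr => u uK.
rewrite (eq_bigl (mem [set g in edges_in K | u \in g])); last by move=> g; rewrite !inE.
by rewrite sumr_const card_clique_edges_at.
Qed.

Lemma card_clique_edges (K : {set T}) : is_clique e K ->
  (#|edges_in K| * 2 = #|K| * (#|K| - 1))%N.
Proof.
move=> cK; have := clique_sum_over_edges (fun=> 1%N) cK.
rewrite (eq_bigr (fun=> 2%N)); last first.
  by move=> g /edges_inP[x [y [exy _ _ ->]]]; rewrite sum_set2 ?edge_neq.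
rewrite !sumr_const natn -[2%N *+ _]mulr_natr -[#|K| *+ _]mulr_natr !natn !natrME.
by rewrite mulnC.
Qed.

Lemma path_erestr (B : {set T}) x p :
  path e x p -> {subset x :: p <= B} -> path (erestr e B) x p.
Proof.
move=> pp sB; apply: (@sub_in_path _ (mem B) e) pp; last exact/allP.
by move=> y z yB zB eyz; rewrite /erestr /= eyz yB zB.
Qed.

Lemma path_erestr_sub (V : {set T}) x s : path (erestr e V) x s -> {subset s <= V}.
Proof.
elim: s x => [//|y s IHs] x /= /andP[/and3P[_ _ yV] ps] z.
by rewrite inE => /orP[/eqP->//|]; apply: IHs ps z.
Qed.

Lemma path_connected_in x p : path e x p -> connected_in e [set y in x :: p].
Proof.
move=> pp; have pB : path (erestr e [set y in x :: p]) x p.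
  by apply: path_erestr pp _ => y yp; rewrite inE.
apply/connectedP => y z; rewrite !inE => yp zp.
apply: (connect_trans (y := x)); last exact: path_connect pB _ zp.
by rewrite connect_erestr_sym; apply: path_connect pB _ yp.
Qed.

Lemma connected_in0 : connected_in e set0.
Proof. by apply/connectedP => y; rewrite inE. Qed.

Lemma cycle_no_cut_vertex (t : seq T) :
  uniq t -> cycle e t -> no_cut_vertex e [set x in t].
Proof.
move=> ut ct; apply/andP; split.
  case: t ct {ut} => [|x p] ct; first exact: connected_in0.
  by apply: path_connected_in; move: ct; rewrite /= rcons_path => /andP[].
apply/forall_inP => v; rewrite inE => /rot_to[i q tE].
have := rot_uniq i t; rewrite tE ut => /andP[vq _].
have : cycle e (v :: q) by rewrite -tE rot_cycle.
have -> : [set x in t] :\ v = [set x in q].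
  apply/setP => u; rewrite !inE -(mem_rot i) tE inE.
  by case: eqVneq => [->|]; rewrite ?(negbTE vq).
case: q {tE vq} => [|h q] /=; first by rewrite connected_in0.
by rewrite rcons_path => /andP[_ /andP[ph _]]; apply: path_connected_in.
Qed.

Lemma clique_no_cut_vertex (B : {set T}) : is_clique e B -> no_cut_vertex e B.
Proof.
have clique_connected (C : {set T}) :
    {in C &, forall x y, x != y -> e x y} -> connected_in e C.
  move=> cC; apply/connectedP => x y xC yC.
  have [<-|xy] := eqVneq x y; first exact: connect0.
  by apply: connect1; rewrite /erestr /= cC ?xC ?yC.
move/cliqueP => cB; apply/andP; split; first exact: clique_connected.
apply/forall_inP => v _; apply: clique_connected => x y /setD1P[_ xB] /setD1P[_ yB].
exact: cB.
Qed.

Lemma cycle_edgesetP (F : {set {set T}}) :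
  reflect (exists t, [/\ uniq t, (2 < size t)%N, cycle e t & F = cycle_edges t])
          (is_cycle_edgeset e F).
Proof.
apply: (iffP existsP) => [[k /existsP[t /and4P[k2 ut ct /eqP->]]] | [t [ut st ct ->]]].
  by exists t; rewrite size_tuple.
have tT : (size t < #|T|.+1)%N by rewrite ltnS -(card_uniqP ut) max_card.
exists (Ordinal tT); apply/existsP; exists (in_tuple t).
by rewrite /= st ut ct eqxx.
Qed.

Lemma cycle_edges_sub (t : seq T) g : g \in cycle_edges t -> {subset g <= t}.
Proof. by move=> /imsetP[u ut ->] z; rewrite !inE => /orP[]/eqP->; rewrite ?mem_next. Qed.

Lemma cycle_edges_edges (t : seq T) : cycle e t -> {subset cycle_edges t <= edges e}.
Proof.
move=> ct _ /imsetP[u ut ->]; apply/edgesP.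
by exists u, (next t u); split => //; apply: next_cycle ct ut.
Qed.

Lemma next2_neq (t : seq T) x :
  uniq t -> (2 < size t)%N -> x \in t -> next t (next t x) != x.
Proof.
move=> ut st /rot_to[i q tE].
have : uniq (x :: q) by rewrite -tE rot_uniq.
have : (2 < size (x :: q))%N by rewrite -tE size_rot.
rewrite -!(next_rot i ut) tE.
case: q {tE} => [|a [|b q]] //= _; rewrite !inE !negb_or.
move=> /and3P[/and3P[xa xb _] /andP[ab _] _].
by rewrite eqxx [a == x]eq_sym (negbTE xa) eqxx eq_sym.
Qed.

Lemma cycle_edges_inj (t : seq T) : uniq t -> (2 < size t)%N ->
  {in t &, injective (fun x => [set x; next t x])}.
Proof.
move=> ut st x y xt yt /= xyE; apply/eqP/negP => /negP xy.
have : x \in [set y; next t y] by rewrite -xyE !inE eqxx.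
rewrite !inE (negbTE xy) /= => /eqP xE.
have : y \in [set x; next t x] by rewrite xyE !inE eqxx.
rewrite !inE eq_sym (negbTE xy) /= => /eqP yE.
by move: (next2_neq ut st xt); rewrite -yE -xE eqxx.
Qed.

Lemma clique_path (K : {set T}) x p : is_clique e K -> uniq (x :: p) ->
  {subset x :: p <= K} -> path e x p.
Proof.
move/cliqueP => cK; elim: p x => [//|y p IHp] x /= /andP[xyp /andP[yp up]] sK.
rewrite cK ?sK ?mem_head ?inE ?eqxx ?orbT //; last first.
  by apply: contraNneq xyp => ->; apply: mem_head.
by apply: IHp; rewrite /= ?yp // => z zp; apply: sK; rewrite inE zp orbT.
Qed.

Lemma clique_cycle (K : {set T}) t : is_clique e K -> uniq t ->
  {subset t <= K} -> (1 < size t)%N -> cycle e t.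
Proof.
move=> cK ut sK; case: t ut sK => [//|x [//|y p]] ut sK _.
change (path e x (rcons (y :: p) x)); rewrite rcons_path (clique_path cK ut sK) /=.
have ly : last y p \in y :: p by apply: mem_last.
move: ut => /andP[xyp _]; move/cliqueP: cK; apply.
- by apply: sK; rewrite inE ly orbT.
- by apply: sK; apply: mem_head.
- by apply: contraNneq _ xyp => <-.
Qed.

Lemma clique_hamilton_cycle (K : {set T}) x y : is_clique e K ->
  x \in K -> y \in K -> x != y ->
  exists t, [/\ uniq t, t =i K, size t = #|K|, cycle e t & [set x; y] \in cycle_edges t].
Proof.
move=> cK xK yK xy; pose t := [:: x, y & enum (K :\ x :\ y)].
have ut : uniq t.
  by rewrite /= !inE !mem_enum !inE !eqxx /= andbF orbF (negbTE xy) enum_uniq.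
have tK : t =i K.
  move=> z; rewrite !inE mem_enum !inE.
  have [->|zx] := eqVneq z x; first by rewrite xK.
  by have [->|zy] := eqVneq z y; rewrite ?yK ?orbT.
have st : size t = #|K| by rewrite -(card_uniqP ut); apply: eq_card.
exists t; split => //.
  apply: (clique_cycle cK ut) => [z|]; first by rewrite tK.
  by rewrite st (cardsD1 x) (cardsD1 y) xK !inE eq_sym xy yK.
by apply/imsetP; exists x; rewrite ?mem_head //= eqxx.
Qed.

Lemma path_erestr_avoid (V : {set T}) v x p : path (erestr e V) x p ->
  x \in V -> v \notin x :: p -> path (erestr e (V :\ v)) x p.
Proof.
move=> pp xV vp; have sV := path_erestr_sub pp.
apply: path_erestr => [|z zp]; first by apply: sub_path pp => a b /and3P[].
rewrite in_setD1.
apply/andP; split; first by apply: contraNneq _ vp => <-.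
by move: zp; rewrite inE => /orP[/eqP->//|/sV].
Qed.

Lemma maximal_path (V : {set T}) x0 : x0 \in V ->
  exists x q, [/\ x \in V, uniq (x :: q), path (erestr e V) x q &
                  forall u, u \in V -> e (last x q) u -> u \in x :: q].
Proof.
move=> x0V; pose P n := [exists x, [exists p : n.-tuple T,
  [&& x \in V, uniq (x :: p) & path (erestr e V) x p]]].
have P0 : exists n, P n.
  by exists 0%N; apply/existsP; exists x0; apply/existsP; exists [tuple]; rewrite x0V.
have P_bound n : P n -> (n <= #|T|)%N.
  case/existsP => x /existsP[p /and3P[_ up _]].
  by have := max_card (mem (x :: p)); rewrite (card_uniqP up) /= size_tuple => /ltnW.
case: (ex_maxnP P0 P_bound) => n /existsP[x /existsP[p /and3P[xV up pp]]] max_n.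
exists x, p; split => // u uV eu; apply: contraT => u_p.
suff /max_n : P n.+1 by rewrite ltnn.
apply/existsP; exists x; apply/existsP; exists [tuple of rcons p u].
move: u_p up; rewrite inE negb_or cons_uniq => /andP[ux u_p] /andP[xp up].
rewrite /= xV mem_rcons inE negb_or eq_sym ux xp rcons_uniq u_p up.
rewrite rcons_path pp /erestr /= eu uV andbT.
by have := mem_last x p; rewrite inE => /orP[/eqP->|/(path_erestr_sub pp)].
Qed.

Lemma connect_avoid_last_step (V : {set T}) v a : a \in V :\ v ->
  connect (erestr e V) a v ->
  exists u, [/\ u \in V :\ v, e u v & connect (erestr e (V :\ v)) a u].
Proof.
move=> /setD1P[av aV] /connectP[s ps vE]; subst v.
case: (shortenP ps) av => {ps}s ps us _.
case/lastP: s ps us => [|s v]; first by rewrite /= eqxx.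
rewrite last_rcons rcons_path -rcons_cons rcons_uniq.
move=> /andP[ps /and3P[euv uV _]] /andP[vs _] av.
have ps' := path_erestr_avoid ps aV vs.
exists (last a s); split => //; last by apply: path_connect ps' _ (mem_last a s).
rewrite in_setD1 uV andbT; apply: contraNneq vs => <-; exact: mem_last.
Qed.

Lemma connect_avoid_last (V : {set T}) x q u : x \in V -> uniq (x :: q) ->
  path (erestr e V) x q -> u \in x :: q -> u != last x q ->
  connect (erestr e (V :\ last x q)) x u.
Proof.
case/lastP: q => [|q v] xV; first by move=> _ _; rewrite inE => /eqP->; rewrite eqxx.
rewrite last_rcons -rcons_cons rcons_uniq rcons_path => /andP[vq _] /andP[pq _].
rewrite mem_rcons inE => /orP[/eqP->|uq _]; first by rewrite eqxx.
exact: path_connect (path_erestr_avoid pq xV vq) _ uq.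
Qed.

Lemma exists_non_cut_vertex (V : {set T}) x0 : x0 \in V -> connected_in e V ->
  exists2 v, v \in V & connected_in e (V :\ v).
Proof.
move=> x0V /connectedP cV.
have [x [q [xV uq pq max_q]]] := maximal_path x0V.
have vV : last x q \in V.
  by have := mem_last x q; rewrite inE => /orP[/eqP->|/(path_erestr_sub pq)].
exists (last x q) => //.
have to_x a : a \in V :\ last x q -> connect (erestr e (V :\ last x q)) a x.
  move=> aV; have /setD1P[_ aV'] := aV.
  have [u [uV euv cau]] := connect_avoid_last_step aV (cV _ _ aV' vV).
  apply: connect_trans cau _; rewrite connect_erestr_sym.
  move: uV => /setD1P[uv uV]; apply: connect_avoid_last => //.
  by apply: max_q; rewrite // e_sym.
apply/connectedP => a b aV bV; apply: connect_trans (to_x a aV) _.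
by rewrite connect_erestr_sym; apply: to_x.
Qed.

Definition nbhd_in (V : {set T}) v := [set u in V | e v u].

Lemma nbhd_in_gt0 (V : {set T}) v u : connected_in e V -> v \in V -> u \in V -> u != v ->
  (0 < #|nbhd_in V v|)%N.
Proof.
move=> /connectedP cV vV uV uv; have /connectP[[|h p] /= pp uE] := cV v u vV uV.
  by rewrite uE eqxx in uv.
by move: pp => /andP[/and3P[evh _ hV] _]; apply/card_gt0P; exists h; rewrite inE hV.
Qed.

Definition edge_block (f : {set T}) := [set z | (z \in f) || [forall u in f, e u z]].

Lemma mem_edge_block x y z :
  (z \in edge_block [set x; y]) = [|| z == x, z == y | e x z && e y z].
Proof.
rewrite !inE -orbA; congr [|| _, _ | _].
apply/forall_inP/andP => [exyz | [exz eyz] u]; first by rewrite !exyz ?inE ?eqxx ?orbT.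
by rewrite !inE => /orP[]/eqP->.
Qed.

Lemma subset_edge_block x y : [set x; y] \subset edge_block [set x; y].
Proof. by apply/subsetP => z; rewrite mem_edge_block !inE => /orP[]->; rewrite ?orbT. Qed.

Lemma clique_sub_edge_block (B : {set T}) x y : is_clique e B -> x \in B -> y \in B ->
  B \subset edge_block [set x; y].
Proof.
move/cliqueP => cB xB yB; apply/subsetP => z zB; rewrite mem_edge_block.
have [//|zx] := eqVneq z x; have [//|zy] := eqVneq z y.
by rewrite /= !cB // eq_sym.
Qed.

Section BlockGraph.

Hypothesis blocks_clique : forall B, is_block e B -> is_clique e B.

Lemma no_cut_vertex_clique (B : {set T}) : no_cut_vertex e B -> is_clique e B.
Proof.
move=> nB; pose P (B' : {set T}) := (B \subset B') && no_cut_vertex e B'.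
have PB : P B by rewrite /P subxx.
case: (arg_maxnP (fun B' : {set T} => #|B'|) PB) => B' /andP[sBB' nB'] maxB'.
have bB' : is_block e B'.
  apply/andP; split=> //; apply/forallP => C; apply/implyP => /andP[sB'C nC].
  have := maxB' C; rewrite /P (subset_trans sBB' sB'C) nC => /(_ isT) leCB'.
  by rewrite eq_sym eqEcard sB'C.
apply/cliqueP => x y xB yB; move/cliqueP: (blocks_clique bB').
by apply; apply: (subsetP sBB').
Qed.

Lemma cycle_clique (t : seq T) : uniq t -> cycle e t ->
  {in t &, forall x y, x != y -> e x y}.
Proof.
move=> ut ct x y xt yt; move/cliqueP: (no_cut_vertex_clique (cycle_no_cut_vertex ut ct)).
by apply; rewrite inE.
Qed.

Lemma common_neighbours_adjacent x y z1 z2 : e x y ->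
  e x z1 -> e y z1 -> e x z2 -> e y z2 -> z1 != z2 -> e z1 z2.
Proof.
move=> exy ex1 ey1 ex2 ey2 z12.
have ut : uniq [:: x; z1; y; z2].
  rewrite /= !inE !negb_or (edge_neq ex1) (edge_neq exy) (edge_neq ex2).
  by rewrite (edge_neq ey2) z12 eq_sym (edge_neq ey1).
have ct : cycle e [:: x; z1; y; z2] by rewrite /= ex1 e_sym ey1 ey2 e_sym ex2.
by apply: (cycle_clique ut ct) => //; rewrite !inE eqxx ?orbT.
Qed.

Lemma edge_block_clique x y : e x y -> is_clique e (edge_block [set x; y]).
Proof.
move=> exy; apply/cliqueP => a b; rewrite !mem_edge_block.
move=> /or3P[/eqP->|/eqP->|/andP[xa ya]] /or3P[/eqP->|/eqP->|/andP[xb yb]];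
  rewrite ?eqxx // 1?e_sym // => ab.
by apply: (common_neighbours_adjacent exy xb yb xa ya); rewrite eq_sym.
Qed.

Lemma edge_block_is_block x y : e x y -> is_block e (edge_block [set x; y]).
Proof.
move=> exy; apply/andP; split; first exact/clique_no_cut_vertex/edge_block_clique.
apply/forallP => B; apply/implyP => /andP[sB nB].
have sxyB := subset_trans (subset_edge_block x y) sB.
rewrite eqEsubset sB andbT clique_sub_edge_block ?(no_cut_vertex_clique nB) //.
  by apply: (subsetP sxyB); rewrite !inE eqxx.
by apply: (subsetP sxyB); rewrite !inE eqxx orbT.
Qed.

Lemma edge_block_eq (K : {set T}) x y : is_block e K -> e x y -> x \in K -> y \in K ->
  edge_block [set x; y] = K.
Proof.
move=> bK exy xK yK; have sK := clique_sub_edge_block (blocks_clique bK) xK yK.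
move: bK => /andP[_ /forallP/(_ (edge_block [set x; y]))].
by rewrite sK clique_no_cut_vertex ?edge_block_clique // => /eqP.
Qed.

Lemma cycle_sub_edge_block (t : seq T) x y : uniq t -> cycle e t ->
  [set x; y] \in cycle_edges t -> {subset t <= edge_block [set x; y]}.
Proof.
move=> ut ct /cycle_edges_sub sxy z zt; rewrite mem_edge_block.
have xt : x \in t by apply: sxy; rewrite !inE eqxx.
have yt : y \in t by apply: sxy; rewrite !inE eqxx orbT.
have [//|zx] := eqVneq z x; have [//|zy] := eqVneq z y.
by rewrite /= !(cycle_clique ut ct) // eq_sym.
Qed.

Lemma cycle_sub_block (K : {set T}) (t : seq T) x y : is_block e K -> e x y ->
  x \in K -> y \in K -> uniq t -> cycle e t -> [set x; y] \in cycle_edges t ->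
  {subset t <= K}.
Proof.
move=> bK exy xK yK ut ct xyt z zt; rewrite -(edge_block_eq bK exy xK yK).
exact: cycle_sub_edge_block ut ct xyt z zt.
Qed.

Lemma sum_edges_by_block (M : nmodType) (F : {set T} -> M) :
  \sum_(f in edges e) F f = \sum_(K in edge_block @: edges e) \sum_(f in edges_in K) F f.
Proof.
rewrite (partition_big edge_block [in edge_block @: edges e]); last exact: imset_f.
apply: eq_bigr => _ /imsetP[_ /edgesP[x [y [exy ->]]] ->]; apply: eq_bigl => f.
apply/andP/edges_inP => [[/edgesP[u [v [euv fE]]] /eqP Ef] | [u [v [euv uK vK ->]]]].
  exists u, v; rewrite -Ef fE; split => //; apply: (subsetP (subset_edge_block u v)).
    by rewrite !inE eqxx.
  by rewrite !inE eqxx orbT.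
split; first by apply/edgesP; exists u, v.
by rewrite (edge_block_eq (edge_block_is_block exy)).
Qed.

Section EdgeShare.

Variable R : numFieldType.

Lemma natr_card_clique_edges (K : {set T}) : is_clique e K ->
  #|edges_in K|%:R = #|K|%:R * (#|K|%:R - 1) / 2 :> R.
Proof.
move=> /card_clique_edges /(congr1 (fun k => k%:R : R)) /=; rewrite !natrM.
have [->|K_gt0] := posnP #|K|.
  by rewrite !mul0r => /eqP; rewrite mulf_eq0 => /orP[/eqP //|]; rewrite pnatr_eq0.
by rewrite natrB // => <-; rewrite mulfK ?pnatr_eq0.
Qed.

(* For an edge f inside V, edge_block f :&: V is the block of the subgraph induced
   by V that contains f. *)
Definition edge_share (V f : {set T}) : R := (#|edge_block f :&: V|%:R)^-1.

Section RemoveVertex.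

Variables (V : {set T}) (v : T).
Hypotheses (vV : v \in V) (conn_Vv : connected_in e (V :\ v)).

Local Notation N := (nbhd_in V v).

Lemma nbhd_in_sub : N \subset V :\ v.
Proof.
by apply/subsetP => u; rewrite !inE => /andP[-> /edge_neq]; rewrite eq_sym => ->.
Qed.

Lemma notin_nbhd_in : v \notin N.
Proof. by rewrite inE e_irr andbF. Qed.

Lemma vertex_nbhd_sub : v |: N \subset V.
Proof. by apply/subsetP => u; rewrite !inE => /orP[/eqP->|/andP[]]. Qed.

Lemma card_vertex_nbhd : #|v |: N| = #|N|.+1.
Proof. by rewrite cardsU1 notin_nbhd_in. Qed.

Lemma nbhd_in_clique : is_clique e N.
Proof.
(* A shortest path from y to z avoiding v closes a cycle through v. *)
apply/cliqueP => y z yN zN yz; have sN := subsetP nbhd_in_sub.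
move: (yN) (zN); rewrite !inE => /andP[_ evy] /andP[_ evz].
move/connectedP: conn_Vv => /(_ y z (sN y yN) (sN z zN)) /connectP[p pp zE].
case: (shortenP pp) zE => {pp}p pp up _ zE.
have sp : {subset y :: p <= V :\ v}.
  by move=> u; rewrite inE => /orP[/eqP->|/(path_erestr_sub pp)//]; apply: sN.
have vp : v \notin y :: p by apply/negP => /sp; rewrite !inE eqxx.
have ct : cycle e [:: v, y & p].
  change (path e v (rcons (y :: p) v)); rewrite rcons_path /= evy -zE e_sym evz andbT.
  by apply: sub_path pp => a b /and3P[].
have ut : uniq [:: v, y & p] by rewrite cons_uniq vp.
apply: (cycle_clique ut ct) => //; first by rewrite !inE eqxx orbT.
by rewrite zE inE mem_last orbT.
Qed.

Lemma vertex_nbhd_clique : is_clique e (v |: N).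
Proof.
apply/cliqueP => a b; rewrite !in_setU1 => /orP[/eqP->|aN] /orP[/eqP->|bN] ab.
- by rewrite eqxx in ab.
- by move: bN; rewrite inE => /andP[].
- by move: aN; rewrite inE e_sym => /andP[].
- by move/cliqueP: nbhd_in_clique; apply.
Qed.

Lemma edge_block_vertex_nbhd x y : e x y -> x \in v |: N -> y \in v |: N ->
  edge_block [set x; y] :&: V = v |: N.
Proof.
move=> exy xN yN; apply/eqP; rewrite eqEsubset subsetI vertex_nbhd_sub.
rewrite clique_sub_edge_block ?vertex_nbhd_clique ?andbT //.
apply/subsetP => z; rewrite in_setI mem_edge_block => /andP[+ zV].
case/or3P => [/eqP->|/eqP->|/andP[exz eyz]] //; rewrite in_setU1 inE zV /=.
have [//|zv] := eqVneq z v; move: xN yN; rewrite !in_setU1 !inE.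
case: eqVneq => [<- _|xv /= /andP[_ evx]]; first by rewrite exz.
case: eqVneq => [<- _|yv /= /andP[_ evy]]; first by rewrite eyz.
by rewrite e_sym; apply: (common_neighbours_adjacent exy) => //; rewrite e_sym.
Qed.

Lemma edge_share_vertex_nbhd f :
  f \in edges_in (v |: N) -> edge_share V f = (#|N|.+1%:R)^-1.
Proof.
move=> /edges_inP[x [y [exy xN yN ->]]].
by rewrite /edge_share edge_block_vertex_nbhd ?card_vertex_nbhd.
Qed.

Lemma edge_block_setD1 x y : x \in V :\ v -> y \in V :\ v -> ~~ ([set x; y] \subset N) ->
  edge_block [set x; y] :&: (V :\ v) = edge_block [set x; y] :&: V.
Proof.
move=> /setD1P[xv xV] /setD1P[yv yV] xyN; apply/setP => z; rewrite !in_setI in_setD1.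
have [->|//] := eqVneq z v.
rewrite /= mem_edge_block eq_sym (negbTE xv) eq_sym (negbTE yv) /=.
rewrite andbF vV andbT; apply/esym/negP => /andP[exv eyv]; move/negP: xyN; apply.
by apply/subsetP => u; rewrite !inE => /orP[]/eqP->; rewrite e_sym ?xV ?yV ?exv ?eyv.
Qed.

Lemma sum_edge_share_at_vertex :
  \sum_(f in edges_in V | v \in f) edge_share V f = #|N|%:R / #|N|.+1%:R.
Proof.
have edges_at_v f :
    (f \in edges_in V) && (v \in f) = (f \in [set g in edges_in (v |: N) | v \in g]).
  rewrite inE; apply/andP/andP => -[fE vf]; split => //; last first.
    exact: edges_inS vertex_nbhd_sub _ fE.
  move: fE vf => /edges_inP[x [y [exy xV yV ->]]] vxy; apply/edges_inP; exists x, y.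
  split=> //; move: vxy; rewrite !inE => /orP[]/eqP->; rewrite ?eqxx //.
  - by rewrite e_sym exy xV orbT.
  - by rewrite exy yV orbT.
rewrite (eq_bigl _ _ edges_at_v) (eq_bigr (fun=> (#|N|.+1%:R)^-1)); last first.
  by move=> f /setIdP[fE _]; apply: edge_share_vertex_nbhd.
rewrite sumr_const (card_clique_edges_at vertex_nbhd_clique (setU11 v N)).
by rewrite card_vertex_nbhd subSS subn0 -[_ *+ #|N|]mulr_natl.
Qed.

Lemma edge_share_nbhd f : f \in edges_in N ->
  edge_share V f = (#|N|.+1%:R)^-1 /\ edge_share (V :\ v) f = (#|N|%:R)^-1.
Proof.
move=> /edges_inP[x [y [exy xN yN ->]]]; have [xvN yvN] := (setU1r v xN, setU1r v yN).
rewrite /edge_share setIDA !edge_block_vertex_nbhd // card_vertex_nbhd.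
by rewrite setU1K ?notin_nbhd_in.
Qed.

Lemma edges_in_nbhd f : (f \in edges_in (V :\ v)) && (f \subset N) = (f \in edges_in N).
Proof.
apply/andP/idP => [[] | fN]; first by rewrite !inE => /andP[-> _].
by rewrite (edges_inS nbhd_in_sub fN); move: fN; rewrite inE => /andP[].
Qed.

Lemma sum_edge_share_setD1 : (0 < #|N|)%N ->
  \sum_(f in edges_in V) edge_share V f =
  \sum_(f in edges_in (V :\ v)) edge_share (V :\ v) f + 2^-1.
Proof.
move=> N_gt0; rewrite (bigID (fun f : {set T} => v \in f)) /= sum_edge_share_at_vertex.
rewrite (eq_bigl [in edges_in (V :\ v)]) => [|f]; last by rewrite !inE subsetD1 andbA.
rewrite (bigID (fun f : {set T} => f \subset N)) /= !(eq_bigl _ _ edges_in_nbhd).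
rewrite [in RHS](bigID (fun f : {set T} => f \subset N)) /= !(eq_bigl _ _ edges_in_nbhd).
rewrite (eq_bigr (fun=> (#|N|.+1%:R)^-1)) => [|f /edge_share_nbhd[] //].
rewrite [in RHS](eq_bigr (fun=> (#|N|%:R)^-1)) => [|f /edge_share_nbhd[] //].
rewrite (eq_bigr (edge_share (V :\ v))) => [|f]; last first.
  by move=> /andP[/edges_inP[x [y [_ xV yV ->]]] xyN]; rewrite /edge_share edge_block_setD1.
rewrite !sumr_const -[(#|N|.+1%:R)^-1 *+ _]mulr_natl -[(#|N|%:R)^-1 *+ _]mulr_natl.
rewrite natr_card_clique_edges ?nbhd_in_clique //.
have m_neq0 : (#|N|%:R : R) != 0 by rewrite pnatr_eq0 -lt0n.
have m1_neq0 : (#|N|%:R + 1 : R) != 0 by rewrite natr1 pnatr_eq0.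
by rewrite -[#|N|.+1%:R]natr1; field; rewrite m_neq0 m1_neq0.
Qed.

End RemoveVertex.


Lemma sum_edge_share (V : {set T}) : V != set0 -> connected_in e V ->
  \sum_(f in edges_in V) edge_share V f = (#|V|%:R - 1) / 2.
Proof.
have [n] := ubnP #|V|; elim: n V => // n IHn V /ltnSE V_le V0 cV.
have /set0Pn[x0 x0V] := V0.
have [V_le1 | V_gt1] := leqP #|V| 1.
  have V1 : #|V| = 1%N by apply/eqP; rewrite eqn_leq V_le1 card_gt0.
  rewrite V1 subrr mul0r big_pred0 // => f.
  apply/negbTE/edges_inP => -[x [y [exy xV yV _]]].
  by move/card_le1_eqP: V_le1 => /(_ y x yV xV) yx; rewrite yx e_irr in exy.
have [v vV cVv] := exists_non_cut_vertex x0V cV.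
have /card_gt0P[u /setD1P[uv uV]] : (0 < #|V :\ v|)%N.
  by move: V_gt1; rewrite (cardsD1 v V) vV add1n ltnS.
have Vv_lt : (#|V :\ v| < n)%N by rewrite (cardsD1 v V) vV in V_le.
have Vv0 : V :\ v != set0 by apply/set0Pn; exists u; rewrite in_setD1 uv.
rewrite (sum_edge_share_setD1 vV cVv (nbhd_in_gt0 cV vV uV uv)) IHn //.
by rewrite (cardsD1 v V) vV add1n -natr1; field.
Qed.

Lemma sum_edge_share_block (K : {set T}) : is_block e K -> (0 < #|K|)%N ->
  \sum_(f in edges_in K) edge_share setT f = (#|K|%:R - 1) / 2.
Proof.
move=> bK K_gt0; rewrite (eq_bigr (fun=> (#|K|%:R)^-1)); last first.
  by move=> f /edges_inP[x [y [exy xK yK ->]]]; rewrite /edge_share setIT (edge_block_eq bK).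
rewrite sumr_const -[_ *+ #|edges_in K|]mulr_natl natr_card_clique_edges ?blocks_clique //.
by field; rewrite pnatr_eq0 -lt0n.
Qed.

End EdgeShare.

Section Weights.

Variables (R : realFieldType) (w : {set T} -> R).
Hypothesis w_gt0 : forall f, f \in edges e -> 0 < w f.

Definition vertex_induced (K : {set T}) (a : T -> R) :=
  {in K &, forall u v, u != v -> w [set u; v] = (a u + a v) / 2}.

Definition nonneg_vertex_induced (K : {set T}) :=
  exists a : T -> R, {in K, forall v, 0 <= a v} /\ vertex_induced K a.

Lemma cycle_weight_vertex_induced (K : {set T}) a (t : seq T) : vertex_induced K a ->
  uniq t -> (2 < size t)%N -> cycle e t -> {subset t <= K} ->
  cycle_weight w (cycle_edges t) = \sum_(x in t) a x.
Proof.
move=> aK ut st ct tK; rewrite /cycle_weight big_imset /=; last exact: cycle_edges_inj.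
transitivity (\sum_(x in t) (a x + a (next t x)) / 2).
  apply: eq_bigr => x xt; apply: aK; rewrite ?tK ?mem_next //.
  exact: edge_neq (next_cycle ct xt).
by rewrite -mulr_suml big_split /= sum_next //; field.
Qed.

Lemma cycle_weight_gt0 (t : seq T) : cycle e t -> (0 < size t)%N ->
  0 < cycle_weight w (cycle_edges t).
Proof.
case: t => [//|x p] ct _; have Ft := cycle_edges_edges ct.
have xF : [set x; next (x :: p) x] \in cycle_edges (x :: p).
  by apply: imset_f; apply: mem_head.
rewrite /cycle_weight (bigD1 _ xF) /=; apply: lt_le_trans (w_gt0 (Ft _ xF)) _.
by rewrite lerDl; apply: sumr_ge0 => g /andP[gF _]; apply/ltW/w_gt0/Ft.
Qed.

Lemma Cw_gt0 f : f \in edges e -> 0 < Cw e w f.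
Proof.
move=> fE; rewrite /Cw; case: ifPn => [/existsP[F /andP[FC fF]] | _]; last first.
  by rewrite mulr_gt0 ?w_gt0.
case/cycle_edgesetP: (FC) => t [ut st ct FE]; subst F.
apply: lt_le_trans (cycle_weight_gt0 ct (ltnW (ltnW st))) _.
by apply: le_bigmax_cond; rewrite FC fF.
Qed.

Lemma Cw_bridge (K : {set T}) f : is_block e K -> #|K| = 2 -> f \in edges_in K ->
  Cw e w f = 2 * w f.
Proof.
move=> bK K2 /edges_inP[x [y [exy xK yK ->]]]; rewrite /Cw ifN //.
apply/existsP => -[F /andP[/cycle_edgesetP[t [ut st ct ->]] xyt]].
have tK := cycle_sub_block bK exy xK yK ut ct xyt.
have : (#|t| <= #|K|)%N by apply/subset_leq_card/subsetP.
by rewrite (card_uniqP ut) K2 leqNgt st.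
Qed.

Lemma Cw_block (K : {set T}) a f : is_block e K -> (2 < #|K|)%N -> vertex_induced K a ->
  (forall C : {set T}, C \subset K -> (2 < #|C|)%N ->
     \sum_(x in C) a x <= \sum_(x in K) a x) ->
  f \in edges_in K -> Cw e w f = \sum_(x in K) a x.
Proof.
move=> bK K_gt2 aK a_le /edges_inP[x [y [exy xK yK ->]]].
have [t [ut tK st ct xyt]] := clique_hamilton_cycle (blocks_clique bK) xK yK (edge_neq exy).
have st2 : (2 < size t)%N by rewrite st.
have tK' : {subset t <= K} by move=> z; rewrite tK.
have wt : cycle_weight w (cycle_edges t) = \sum_(z in K) a z.
  by rewrite (cycle_weight_vertex_induced aK ut st2 ct tK'); apply: eq_bigl.
have Ft : is_cycle_edgeset e (cycle_edges t) by apply/cycle_edgesetP; exists t.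
rewrite /Cw ifT; last by apply/existsP; exists (cycle_edges t); rewrite Ft xyt.
apply/le_anti/andP; split; last by rewrite -wt; apply: le_bigmax_cond; rewrite Ft xyt.
apply: bigmax_le => [|F /andP[/cycle_edgesetP[s [us ss cs ->]] xys]].
  by rewrite -wt ltW // cycle_weight_gt0 // ltnW // ltnW.
have sK := cycle_sub_block bK exy xK yK us cs xys.
rewrite (cycle_weight_vertex_induced aK us ss cs sK) -big_set /=.
by apply: a_le; [apply/subsetP => z; rewrite inE => /sK | rewrite cardsE (card_uniqP us)].
Qed.


Lemma triangle_vertex_induced (K : {set T}) : #|K| = 3 -> exists a, vertex_induced K a.
Proof.
move=> K3; have /card_gt0P[x xK] : (0 < #|K|)%N by rewrite K3.
have /cards2P[y [z [yz Kx]]] : #|K :\ x| == 2.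
  by move: K3; rewrite (cardsD1 x K) xK add1n => -[->].
have /setD1P[yx _] : y \in K :\ x by rewrite Kx !inE eqxx.
have /setD1P[zx _] : z \in K :\ x by rewrite Kx !inE eqxx orbT.
have inK u : (u \in K) = [|| u == x, u == y | u == z].
  by rewrite -(setD1K xK) Kx !inE.
pose A := w [set x; y]; pose B := w [set x; z]; pose C := w [set y; z].
(* the solution of a x + a y = 2 A, a x + a z = 2 B, a y + a z = 2 C *)
exists (fun u => if u == x then A + B - C else if u == y then A + C - B else B + C - A).
move=> u v; rewrite !inK => /or3P[]/eqP-> /or3P[]/eqP->; rewrite ?eqxx // => _;
  rewrite ?(negbTE yx) ?(negbTE zx) ?(negbTE (yz : y != z)) 1?eq_sym ?(negbTE yz) ?eqxx;
  rewrite ?[[set y; x]]setUC ?[[set z; x]]setUC ?[[set z; y]]setUC -/A -/B -/C.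
all: by field.
Qed.

Lemma bounded_vertex_weighting (K : {set T}) : (2 < #|K|)%N ->
  ((4 <= #|K|)%N -> nonneg_vertex_induced K) ->
  exists a, vertex_induced K a /\
    forall C : {set T}, C \subset K -> (2 < #|C|)%N -> \sum_(x in C) a x <= \sum_(x in K) a x.
Proof.
move=> K_gt2 large_K; case: (leqP 4 #|K|) => [K_ge4 | K_lt4].
  have [a [a_ge0 aK]] := large_K K_ge4; exists a; split => // C sCK _.
  exact: ler_sum_subset.
have K3 : #|K| = 3 by apply/eqP; rewrite eqn_leq -ltnS K_lt4.
have [a aK] := triangle_vertex_induced K3; exists a; split => // C sCK C_gt2.
by rewrite (_ : C = K) //; apply/eqP; rewrite eqEcard sCK K3.
Qed.

Lemma sum_w_vertex_induced (K : {set T}) a : is_clique e K -> vertex_induced K a ->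
  \sum_(f in edges_in K) w f = (\sum_(x in K) a x) *+ (#|K| - 1) / 2.
Proof.
move=> cK aK; rewrite -(clique_sum_over_edges _ cK) mulr_suml.
apply: eq_bigr => _ /edges_inP[x [y [exy xK yK ->]]].
by rewrite sum_set2 ?edge_neq // aK ?edge_neq.
Qed.

Lemma sum_w_div_Cw_block (K : {set T}) : is_block e K -> (1 < #|K|)%N ->
  ((4 <= #|K|)%N -> nonneg_vertex_induced K) ->
  \sum_(f in edges_in K) w f / Cw e w f = (#|K|%:R - 1) / 2.
Proof.
move=> bK K_gt1 large_K; have cK := blocks_clique bK.
have [K_gt2 | K_le2] := ltnP 2 #|K|; last first.
  have K2 : #|K| = 2 by apply/eqP; rewrite eqn_leq K_le2.
  rewrite (eq_bigr (fun=> 2^-1)) => [|f fK]; last first.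
    have /w_gt0 wf_gt0 : f \in edges e by move: fK; rewrite inE => /andP[].
    by rewrite (Cw_bridge bK K2 fK); field; rewrite gt_eqF.
  by rewrite sumr_const -[_ *+ _]mulr_natl natr_card_clique_edges // K2; field.
have [a [aK a_le]] := bounded_vertex_weighting K_gt2 large_K.
have CwK := Cw_block bK K_gt2 aK a_le.
have S_gt0 : 0 < \sum_(x in K) a x.
  have /card_gt1P[x [y [xK yK xy]]] := K_gt1.
  have xyK : [set x; y] \in edges_in K.
    by apply/edges_inP; exists x, y; rewrite (cliqueP _ cK).
  by rewrite -(CwK _ xyK) Cw_gt0 //; move: xyK; rewrite inE => /andP[].
rewrite (eq_bigr (fun f => w f / \sum_(x in K) a x)) => [|f /CwK-> //].
rewrite -mulr_suml (sum_w_vertex_induced cK aK) -[_ *+ (#|K| - 1)]mulr_natr.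
by rewrite natrB ?(ltnW K_gt1) //; field; rewrite gt_eqF.
Qed.

Hypothesis large_blocks_vertex_induced :
  forall K, is_block e K -> (4 <= #|K|)%N -> nonneg_vertex_induced K.

Lemma sum_w_div_Cw :
  \sum_(f in edges e) w f / Cw e w f = \sum_(f in edges e) edge_share R setT f.
Proof.
rewrite !sum_edges_by_block; apply: eq_bigr => _ /imsetP[_ /edgesP[x [y [exy ->]]] ->].
have bK := edge_block_is_block exy.
have K_gt1 : (1 < #|edge_block [set x; y]|)%N.
  by have := subset_leq_card (subset_edge_block x y); rewrite cards2 edge_neq.
rewrite sum_w_div_Cw_block ?sum_edge_share_block ?(ltnW K_gt1) //.
exact: large_blocks_vertex_induced.
Qed.

End Weights.

End BlockGraph.

End SimpleGraph.

Theorem proposition3p3 (T : finType) (e : rel T) (R : realFieldType)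
  (w : {set T} -> R) :
  (0 < #|T|)%N ->
  block_graph e ->
  (forall f, f \in edges e -> 0 < w f) ->
  (forall K : {set T}, is_block e K -> (4 <= #|K|)%N ->
     exists a : T -> R, (forall v, v \in K -> 0 <= a v) /\
       (forall u v, u \in K -> v \in K -> u != v ->
          w [set u; v] = (a u + a v) / 2)) ->
  \sum_(f in edges e) w f / Cw e w f = (#|T|%:R - 1) / 2.
Proof.
move=> T_gt0 [[e_sym e_irr] [connT blocks_clique]] w_gt0 large_blocks.
rewrite (sum_w_div_Cw e_sym e_irr blocks_clique w_gt0 large_blocks) -edges_inT.
rewrite (sum_edge_share e_sym e_irr blocks_clique) ?cardsT //.
by rewrite -card_gt0 cardsT.
Qed.
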